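(* Let $T:\mathcal{B}(\mathcal{H}_2)\to\mathcal{B}(\mathcal{H}_1)$ be a channel. Let $(n_\alpha)_{\alpha\in\mathbb{N}}$ be a strictly increasing sequence of positive integers such that $\lim_{\alpha\to\infty} n_{\alpha+1}/n_\alpha=1$, and let $M_\alpha$ be positive integers such that $\lim_{\alpha\to\infty}\Delta(T^{\otimes n_\alpha},M_\alpha)=0$. Then every $c\ge 0$ with $$c<\liminf_{\alpha\to\infty}\frac{\log_2 M_\alpha}{n_\alpha}$$ is an achievable rate for $T$. Moreover, if in addition there are constants $\mu,\lambda\ge 0$ with $\Delta(T^{\otimes n_\alpha},M_\alpha)\le \mu e^{-\lambda n_\alpha}$ for all $\alpha$, then for every such $c$ $$\liminf_{n\to\infty}\frac{-1}{n}\log\Delta\bigl(T^{\otimes n},\lfloor 2^{cn}\rfloor\bigr)\ge\lambda .$$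
   Context: All Hilbert spaces are finite dimensional; $\mathcal{B}(\mathcal{H})$ denotes the linear operators on $\mathcal{H}$. A channel with input space $\mathcal{H}_1$ and output space $\mathcal{H}_2$ is a completely positive unital linear map $T:\mathcal{B}(\mathcal{H}_2)\to\mathcal{B}(\mathcal{H}_1)$ (Heisenberg picture). For a linear map $S:\mathcal{B}(\mathcal{K}_2)\to\mathcal{B}(\mathcal{K}_1)$ its cb-norm is $\|S\|_{cb}=\sup\{\|(S\otimes \mathrm{id}_{\mathcal{B}(\mathbb{C}^k)})(A)\| : k\in\mathbb{N},\ A\in\mathcal{B}(\mathcal{K}_2\otimes\mathbb{C}^k),\ \|A\|\le1\}$. For a channel $T:\mathcal{B}(\mathcal{H}_2)\to\mathcal{B}(\mathcal{H}_1)$ and a positive integer $M$, $\Delta(T,M)=\inf_{E,D}\|E\circ T\circ D-\mathrm{id}\|_{cb}$, where $\mathcal{H}_0$ is a Hilbert space of dimension $M$, $\mathrm{id}$ is the identity map of $\mathcal{B}(\mathcal{H}_0)$, and the infimum runs over all channels $D:\mathcal{B}(\mathcal{H}_0)\to\mathcal{B}(\mathcal{H}_2)$ (decodings) and $E:\mathcal{B}(\mathcal{H}_1)\to\mathcal{B}(\mathcal{H}_0)$ (encodings). $T^{\otimes n}:\mathcal{B}(\mathcal{H}_2^{\otimes n})\to\mathcal{B}(\mathcal{H}_1^{\otimes n})$ is the $n$-fold tensor power. A number $c\ge0$ is an achievable rate for $T$ if $\lim_{n\to\infty}\Delta(T^{\otimes n},\lfloor 2^{cn}\rfloor)=0$;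 $\lfloor x\rfloor$ is the largest integer $\le x$. In the last display $\log$ is the natural logarithm. *)

From HB Require Import structures.
From mathcomp Require Import all_boot all_order all_algebra.
From mathcomp Require Import complex mxtens.
From mathcomp Require Import all_classical all_reals all_analysis.
Set Implicit Arguments. Unset Strict Implicit. Unset Printing Implicit Defensive.
Import Order.TTheory GRing.Theory Num.Theory.
Import numFieldNormedType.Exports.
Local Open Scope ring_scope.
Local Open Scope classical_set_scope.

Section QChannels.
Variable R : realType.
Local Notation C := (complex R).

Definition vnorm2 n (v : 'cV[C]_n) : R :=
  \sum_(i < n) ((complex.Re (v i 0)) ^+ 2 + (complex.Im (v i 0)) ^+ 2).
Definition vnorm n (v : 'cV[C]_n) : R := Num.sqrt (vnorm2 v).

Definition opnorm m n (A : 'M[C]_(m, n)) : R :=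
  sup [set r : R | exists v : 'cV[C]_n, vnorm v <= 1 /\ r = vnorm (A *m v)].

Definition adjmx m n (A : 'M[C]_(m, n)) : 'M[C]_(n, m) :=
  \matrix_(i, j) conjc (A j i).
Definition psd n (A : 'M[C]_n) : Prop := exists B : 'M[C]_n, A = adjmx B *m B.

(* tensor product S1 (x) S2 of linear maps between matrix algebras, defined on
   the matrix-unit basis (Kronecker convention of mxtens: (i,p) |-> i*a2 + p) *)
Definition tensmap a1 a2 b1 b2 (S1 : 'M[C]_a1 -> 'M[C]_b1) (S2 : 'M[C]_a2 -> 'M[C]_b2)
  (A : 'M[C]_(a1 * a2)) : 'M[C]_(b1 * b2) :=
  \sum_(i < a1) \sum_(j < a1) \sum_(p < a2) \sum_(q < a2)
     A (mxtens_index (i, p)) (mxtens_index (j, q)) *: (S1 (delta_mx i j) *t S2 (delta_mx p q)).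

Definition ampl a b (S : 'M[C]_a -> 'M[C]_b) k : 'M[C]_(a * k) -> 'M[C]_(b * k) :=
  tensmap S (@id 'M[C]_k).
Arguments ampl {a b} S k.

(* channel: linear, completely positive, unital map B(H2) -> B(H1) (Heisenberg picture) *)
Definition channel d1 d2 (T : 'M[C]_d2 -> 'M[C]_d1) : Prop :=
  [/\ linear T,
      T 1%:M = 1%:M &
      forall (k : nat) (A : 'M[C]_(d2 * k)), psd A -> psd (ampl T k A)].

Definition cbnorm a b (S : 'M[C]_a -> 'M[C]_b) : R :=
  sup [set r : R | exists (k : nat) (A : 'M[C]_(a * k.+1)),
                     opnorm A <= 1 /\ r = opnorm (ampl S k.+1 A)].

Definition Delta d1 d2 (T : 'M[C]_d2 -> 'M[C]_d1) (M : nat) : R :=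
  inf [set r : R | exists (E : 'M[C]_d1 -> 'M[C]_M) (D : 'M[C]_M -> 'M[C]_d2),
          channel E /\ channel D /\
          r = cbnorm (fun A : 'M[C]_M => E (T (D A)) - A)].

Fixpoint pdim (d n : nat) : nat := if n is n'.+1 then d * pdim d n' else 1%N.

Fixpoint tpow d1 d2 (T : 'M[C]_d2 -> 'M[C]_d1) (n : nat) :
    'M[C]_(pdim d2 n) -> 'M[C]_(pdim d1 n) :=
  match n as n0 return 'M[C]_(pdim d2 n0) -> 'M[C]_(pdim d1 n0) with
  | 0 => fun A => A
  | n'.+1 => tensmap T (@tpow d1 d2 T n')
  end.
Arguments tpow {d1 d2} T n.

Definition achievable d1 d2 (T : 'M[C]_d2 -> 'M[C]_d1) (c : R) : Prop :=
  (fun n : nat => Delta (tpow T n) (Num.truncn ((2 : R) `^ (c * n%:R))))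
     @ \oo --> (0 : R).

(* the sequence  -(1/n) log Delta(...)  in the extended reals (log 0 = -oo) *)
Definition err_exponent_seq d1 d2 (T : 'M[C]_d2 -> 'M[C]_d1) (c : R) (n : nat) : \bar R :=
  let x := Delta (tpow T n) (Num.truncn ((2 : R) `^ (c * n%:R))) in
  if x == 0 then +oo%E else ((- ln x) / n%:R)%:E.

End QChannels.

Arguments tpow {R d1 d2} T n.
Arguments ampl {R a b} S k.

From HB Require Import structures.
From mathcomp Require Import all_boot all_order all_algebra.
From mathcomp Require Import complex mxtens sesquilinear spectral.
From mathcomp Require Import all_classical all_reals all_analysis.
From mathcomp Require Import ring lra.
Import Order.TTheory GRing.Theory Num.Theory.
Import numFieldNormedType.Exports.
Local Open Scope ring_scope.
Local Open Scope classical_set_scope.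

Set Implicit Arguments. Unset Strict Implicit. Unset Printing Implicit Defensive.

(* The coding error Delta (T^{(x)n}) M is nonincreasing in the number n of
   channel uses (an extra use can be ignored by the coding) and nondecreasing
   in the code size M (a smaller code space embeds as a corner of a larger
   one).  Given m, choose a with n_a <= m < n_{a+1}.  As n_{a+1}/n_a -> 1 and
   c is below the liminf rate, eventually floor(2^{cm}) <= 2^{c n_{a+1}} <= M_a,
   so Delta (T^{(x)m}) floor(2^{cm}) <= Delta (T^{(x)n_a}) M_a -> 0.  Under the
   bound mu e^{-lam n_a} the same comparison gives
   -ln Delta / m >= (lam n_a - ln mu) / m, and n_a / m -> 1. *)

Section ChannelCoding.
Variable R : realType.
Local Notation C := (complex R).
Local Notation nc := (@Normc.normc R).
Local Notation idx := mxtens_index.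
Local Notation unidx := mxtens_unindex.

(** * Tensor products of matrices and linear maps *)

Lemma big_mxtens_index (V : nmodType) m n (F : 'I_(m * n) -> V) :
  \sum_(x < m * n) F x = \sum_(i < m) \sum_(j < n) F (idx (i, j)).
Proof.
rewrite pair_bigA /= (reindex (@mxtens_index m n)) /=.
  by apply: eq_bigr => -[i j].
by exists (@mxtens_unindex m n) => x _; [exact: mxtens_indexK | exact: mxtens_unindexK].
Qed.

Lemma mxtens_index_eq m n (a b : 'I_m * 'I_n) : (idx a == idx b) = (a == b).
Proof. exact: (inj_eq (can_inj (@mxtens_indexK m n))). Qed.

Lemma mxtens_index_injr m n (i : 'I_m) : injective (fun p : 'I_n => idx (i, p)).
Proof. by move=> x y /eqP; rewrite mxtens_index_eq xpair_eqE eqxx => /eqP. Qed.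

Lemma tensmx_delta m1 n1 m2 n2 (i : 'I_m1) (j : 'I_n1) (p : 'I_m2) (q : 'I_n2) :
  (delta_mx i j : 'M[C]_(m1, n1)) *t (delta_mx p q : 'M[C]_(m2, n2))
  = delta_mx (idx (i, p)) (idx (j, q)).
Proof.
apply/matrixP => x y; case: (mxtens_indexP x) => i' p'; case: (mxtens_indexP y) => j' q'.
rewrite tensmxE !mxE !mxtens_index_eq !xpair_eqE.
by case: (i' == i); case: (j' == j); case: (p' == p); case: (q' == q);
  rewrite /= ?mulr1 ?mulr0 ?mul0r.
Qed.

Lemma tensmx11 m n : (1%:M : 'M[C]_m) *t (1%:M : 'M[C]_n) = 1%:M.
Proof.
apply/matrixP => x y; case: (mxtens_indexP x) => i k; case: (mxtens_indexP y) => j l.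
by rewrite tensmxE !mxE mxtens_index_eq xpair_eqE; case: (i == j); case: (k == l);
  rewrite /= ?mulr1 ?mulr0 ?mul0r.
Qed.

Lemma tensmxDl m n p q (A B : 'M[C]_(m, n)) (X : 'M[C]_(p, q)) :
  (A + B) *t X = A *t X + B *t X.
Proof. by apply/matrixP => i j; rewrite !mxE mulrDl. Qed.

Lemma tensmxZl m n p q a (A : 'M[C]_(m, n)) (X : 'M[C]_(p, q)) :
  (a *: A) *t X = a *: (A *t X).
Proof. by apply/matrixP => i j; rewrite !mxE mulrA. Qed.

Lemma tensmxDr m n p q (A B : 'M[C]_(m, n)) (X : 'M[C]_(p, q)) :
  X *t (A + B) = X *t A + X *t B.
Proof. by apply/matrixP => i j; rewrite !mxE mulrDr. Qed.

Lemma tensmxZr m n p q a (A : 'M[C]_(m, n)) (X : 'M[C]_(p, q)) :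
  X *t (a *: A) = a *: (X *t A).
Proof. by apply/matrixP => i j; rewrite !mxE mulrCA. Qed.

Lemma linear_tensmxl m n p q (X : 'M[C]_(p, q)) :
  linear (fun A : 'M[C]_(m, n) => A *t X).
Proof. by move=> a A B; rewrite tensmxDl tensmxZl. Qed.

Lemma linear_tensmxr m n p q (X : 'M[C]_(p, q)) :
  linear (fun A : 'M[C]_(m, n) => X *t A).
Proof. by move=> a A B; rewrite tensmxDr tensmxZr. Qed.

Section LinearMap.
Variables (m n p q : nat) (F : 'M[C]_(m, n) -> 'M[C]_(p, q)).
Hypothesis linF : linear F.

Lemma linmap0 : F 0 = 0.
Proof. by have := linF (-1) 0 0; rewrite scaleN1r oppr0 addr0 scaleN1r addNr. Qed.

Lemma linmapD x y : F (x + y) = F x + F y.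
Proof. by have := linF 1 x y; rewrite !scale1r. Qed.

Lemma linmapZ a x : F (a *: x) = a *: F x.
Proof. by have := linF a x 0; rewrite !addr0 linmap0 addr0. Qed.

Lemma linmapB x y : F (x - y) = F x - F y.
Proof. by rewrite linmapD -scaleN1r linmapZ scaleN1r. Qed.

Lemma linmap_sum I (r : seq I) (P : pred I) (G : I -> 'M[C]_(m, n)) :
  F (\sum_(i <- r | P i) G i) = \sum_(i <- r | P i) F (G i).
Proof. exact: (big_morph F linmapD linmap0). Qed.

End LinearMap.

Lemma linear_comp m n p q r s (F : 'M[C]_(p, q) -> 'M[C]_(r, s))
    (G : 'M[C]_(m, n) -> 'M[C]_(p, q)) :
  linear F -> linear G -> linear (fun A => F (G A)).
Proof. by move=> lF lG a x y; rewrite lG lF. Qed.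

Lemma linear_sub m n p q (F G : 'M[C]_(m, n) -> 'M[C]_(p, q)) :
  linear F -> linear G -> linear (fun x => F x - G x).
Proof.
move=> lF lG c x y; rewrite (linmapD lF) (linmapD lG) (linmapZ lF) (linmapZ lG).
by rewrite scalerBr addrACA opprD.
Qed.

Lemma linear_mxsub m n p q (f : 'I_m -> 'I_p) (g : 'I_n -> 'I_q) :
  linear (mxsub f g : 'M[C]_(p, q) -> 'M[C]_(m, n)).
Proof. by move=> a A B; apply/matrixP => i j; rewrite !mxE. Qed.

Lemma linear_delta_eq m n p q (F G : 'M[C]_(m, n) -> 'M[C]_(p, q)) :
  linear F -> linear G -> (forall i j, F (delta_mx i j) = G (delta_mx i j)) ->
  F =1 G.
Proof.
move=> lF lG FG A; rewrite (matrix_sum_delta A) (linmap_sum lF) (linmap_sum lG).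
apply: eq_bigr => i _; rewrite (linmap_sum lF) (linmap_sum lG).
by apply: eq_bigr => j _; rewrite (linmapZ lF) (linmapZ lG) FG.
Qed.

Lemma linear_tensdelta_eq m1 m2 n1 n2 p q
    (F G : 'M[C]_(m1 * m2, n1 * n2) -> 'M[C]_(p, q)) :
  linear F -> linear G ->
  (forall i j k l, F (delta_mx i j *t delta_mx k l) = G (delta_mx i j *t delta_mx k l)) ->
  F =1 G.
Proof.
move=> lF lG FG; apply: linear_delta_eq => // x y.
case: (mxtens_indexP x) => i k; case: (mxtens_indexP y) => j l.
by rewrite -tensmx_delta FG.
Qed.

Section TensorMap.
Variables (a1 a2 b1 b2 : nat).
Variables (S1 : 'M[C]_a1 -> 'M[C]_b1) (S2 : 'M[C]_a2 -> 'M[C]_b2).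

Lemma linear_tensmap : linear (tensmap S1 S2).
Proof.
move=> a A B; rewrite /tensmap scaler_sumr -big_split; apply: eq_bigr => i _.
rewrite scaler_sumr -big_split; apply: eq_bigr => j _.
rewrite scaler_sumr -big_split; apply: eq_bigr => k _.
rewrite scaler_sumr -big_split; apply: eq_bigr => l _.
by rewrite !mxE scalerDl scalerA.
Qed.

Lemma tensmap_tensdelta i j k l :
  tensmap S1 S2 (delta_mx i j *t delta_mx k l) = S1 (delta_mx i j) *t S2 (delta_mx k l).
Proof.
rewrite /tensmap (bigD1 i) //= [\sum_(_ < _ | _ != _) _]big1 ?addr0; last first.
  move=> i' ni'; apply: big1 => j' _; apply: big1 => k' _; apply: big1 => l' _.
  by rewrite tensmxE !mxE (negbTE ni') /= !mul0r scale0r.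
rewrite (bigD1 j) //= [\sum_(_ < _ | _ != _) _]big1 ?addr0; last first.
  move=> j' nj'; apply: big1 => k' _; apply: big1 => l' _.
  by rewrite tensmxE !mxE (negbTE nj') andbF /= !mul0r scale0r.
rewrite (bigD1 k) //= [\sum_(_ < _ | _ != _) _]big1 ?addr0; last first.
  move=> k' nk'; apply: big1 => l' _.
  by rewrite tensmxE !mxE (negbTE nk') /= !mulr0 scale0r.
rewrite (bigD1 l) //= [\sum_(_ < _ | _ != _) _]big1 ?addr0; last first.
  by move=> l' nl'; rewrite tensmxE !mxE (negbTE nl') andbF /= !mulr0 scale0r.
by rewrite tensmxE !mxE !eqxx /= mulr1 scale1r.
Qed.

Lemma tensmap_tensmx X Y : linear S1 -> linear S2 ->
  tensmap S1 S2 (X *t Y) = S1 X *t S2 Y.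
Proof.
move=> l1 l2; move: X.
apply: (linear_delta_eq (F := fun X => tensmap S1 S2 (X *t Y))).
- exact: (linear_comp linear_tensmap (linear_tensmxl _)).
- exact: (linear_comp (linear_tensmxl _) l1).
move=> i j; move: Y.
apply: (linear_delta_eq (F := fun Y => tensmap S1 S2 (delta_mx i j *t Y))).
- exact: (linear_comp linear_tensmap (linear_tensmxr _)).
- exact: (linear_comp (linear_tensmxr _) l2).
by move=> k l; rewrite tensmap_tensdelta.
Qed.

End TensorMap.

Lemma linear_ampl a b (S : 'M[C]_a -> 'M[C]_b) k : linear (ampl S k).
Proof. exact: linear_tensmap. Qed.

Lemma ampl_tensdelta a b (S : 'M[C]_a -> 'M[C]_b) k i j p q :
  ampl S k (delta_mx i j *t delta_mx p q) = S (delta_mx i j) *t delta_mx p q.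
Proof. exact: tensmap_tensdelta. Qed.

Lemma ampl_comp a b c (F : 'M[C]_b -> 'M[C]_c) (G : 'M[C]_a -> 'M[C]_b) k A :
  linear F -> ampl (fun X => F (G X)) k A = ampl F k (ampl G k A).
Proof.
move=> lF; move: A.
apply: (linear_tensdelta_eq (G := fun A => ampl F k (ampl G k A))).
- exact: linear_ampl.
- by apply: linear_comp; exact: linear_ampl.
by move=> i j p q; rewrite !ampl_tensdelta /ampl tensmap_tensmx.
Qed.

Lemma ampl_blockE a b (S : 'M[C]_a -> 'M[C]_b) k A : linear S ->
  ampl S k A = \sum_i \sum_j S (delta_mx i j) *t
     mxsub (fun p : 'I_k => idx (i, p)) (fun q : 'I_k => idx (j, q)) A.
Proof.
move=> lS; move: A; apply: linear_tensdelta_eq; first exact: linear_ampl.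
  move=> c A B; rewrite scaler_sumr -big_split; apply: eq_bigr => i _.
  rewrite scaler_sumr -big_split; apply: eq_bigr => j _.
  by rewrite linear_mxsub tensmxDr tensmxZr.
move=> i' j' p q; rewrite ampl_tensdelta.
have blk (i j : 'I_a) : mxsub (fun p0 : 'I_k => idx (i, p0)) (fun q0 : 'I_k => idx (j, q0))
     (delta_mx i' j' *t delta_mx p q) = ((i == i') && (j == j'))%:R *: (delta_mx p q : 'M[C]_k).
  apply/matrixP => x y; rewrite [LHS]mxE tensmxE !mxE.
  by case: (i == i'); case: (j == j'); rewrite /= ?mul1r ?mul0r.
rewrite (bigD1 i') //= [\sum_(_ < _ | _ != _) _]big1 ?addr0; last first.
  by move=> i ni; apply: big1 => j _; rewrite blk (negbTE ni) /= scale0r tensmx0.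
rewrite (bigD1 j') //= [\sum_(_ < _ | _ != _) _]big1 ?addr0; last first.
  by move=> j nj; rewrite blk (negbTE nj) andbF /= scale0r tensmx0.
by rewrite blk !eqxx /= scale1r.
Qed.

Lemma linear_tpow d1 d2 (T : 'M[C]_d2 -> 'M[C]_d1) n : linear (tpow T n).
Proof. by case: n => [|n] //=; exact: linear_tensmap. Qed.


(** * Positive semidefinite matrices and channels *)

Lemma adjmxK m n (A : 'M[C]_(m, n)) : adjmx (adjmx A) = A.
Proof. by apply/matrixP => i j; rewrite !mxE conjcK. Qed.

Lemma adjmxM m n p (A : 'M[C]_(m, n)) (B : 'M[C]_(n, p)) :
  adjmx (A *m B) = adjmx B *m adjmx A.
Proof.
apply/matrixP => i j; rewrite !mxE rmorph_sum; apply: eq_bigr => k _.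
by rewrite !mxE rmorphM mulrC.
Qed.

Lemma adjmx_tensmx m n p q (A : 'M[C]_(m, n)) (B : 'M[C]_(p, q)) :
  adjmx (A *t B) = adjmx A *t adjmx B.
Proof.
apply/matrixP => x y; case: (mxtens_indexP x) => i k; case: (mxtens_indexP y) => j l.
by rewrite tensmxE !mxE !mxtens_indexK rmorphM.
Qed.

Lemma adjmx1 n : adjmx (1%:M : 'M[C]_n) = 1%:M.
Proof. by apply/matrixP => i j; rewrite !mxE rmorph_nat eq_sym. Qed.

Lemma adjmx_conjT m n (A : 'M[C]_(m, n)) : adjmx A = map_mx Num.conj A^T.
Proof. by apply/matrixP => i j; rewrite !mxE. Qed.

Lemma psd_gram_le p n (G : 'M[C]_(p, n)) : (p <= n)%N -> psd (adjmx G *m G).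
Proof.
move=> pn.
(* [P *m G] is [G] padded with zero rows. *)
pose P : 'M[C]_(n, p) := \matrix_(i, j) ((i : nat) == (j : nat))%:R.
have PP : adjmx P *m P = 1%:M.
  apply/matrixP => i j; rewrite !mxE (bigD1 (widen_ord pn i)) //= big1 ?addr0.
    by rewrite !mxE /= eqxx rmorph_nat mul1r.
  move=> k nk; rewrite !mxE.
  have -> : ((k : nat) == (i : nat)) = false.
    by apply/negbTE; apply: contra nk => /eqP e; apply/eqP/val_inj.
  by rewrite rmorph0 mul0r.
by exists (P *m G); rewrite adjmxM !mulmxA -(mulmxA (adjmx G)) PP mulmx1.
Qed.

(* In general, the columns of [adjmx G] are replaced by their coordinates in an
   orthonormal basis of its column space, which has at most [n] vectors. *)
Lemma psd_gram p n (G : 'M[C]_(p, n)) : psd (adjmx G *m G).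
Proof.
pose W := adjmx G; pose Q := schmidt (row_base W).
have uQ : Q \is unitarymx by apply: schmidt_unitarymx; exact: rank_leq_col.
have sWQ : (W <= Q)%MS.
  by apply: (submx_trans _ (schmidt_sub _)); rewrite eq_row_base.
have [D WD] := submxP sWQ.
have -> : adjmx G *m G = adjmx (adjmx D) *m adjmx D.
  have -> : adjmx G *m G = W *m adjmx W by rewrite /W adjmxK.
  have -> : W *m adjmx W = (D *m Q) *m adjmx (D *m Q) by rewrite -WD.
  rewrite adjmxM mulmxA -(mulmxA D) [adjmx Q]adjmx_conjT (unitarymxP uQ) mulmx1.
  by rewrite adjmxK.
by apply: psd_gram_le; exact: rank_leq_row.
Qed.

Lemma psd_mxsub m n (f : 'I_m -> 'I_n) (A : 'M[C]_n) : psd A -> psd (mxsub f f A).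
Proof.
case=> B ->.
have -> : mxsub f f (adjmx B *m B) = adjmx (mxsub id f B) *m mxsub id f B.
  by apply/matrixP => i j; rewrite !mxE; apply: eq_bigr => k _; rewrite !mxE.
exact: psd_gram.
Qed.

Lemma psd_tens1mx r n (A : 'M[C]_n) : psd A -> psd ((1%:M : 'M[C]_r) *t A).
Proof.
case=> B ->; exists (1%:M *t B).
by rewrite adjmx_tensmx adjmx1 tensmx_mul mul1mx.
Qed.

Lemma psd_tensmx1 r n (A : 'M[C]_n) : psd A -> psd (A *t (1%:M : 'M[C]_r)).
Proof.
case=> B ->; exists (B *t 1%:M).
by rewrite adjmx_tensmx adjmx1 tensmx_mul mul1mx.
Qed.

Lemma channel_comp a b c (F : 'M[C]_b -> 'M[C]_c) (G : 'M[C]_a -> 'M[C]_b) :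
  channel F -> channel G -> channel (fun A => F (G A)).
Proof.
case=> lF uF cF [lG uG cG]; split.
- exact: linear_comp.
- by rewrite uG uF.
- by move=> k A pA; rewrite ampl_comp //; apply: cF; apply: cG.
Qed.

Definition mxtens_mapl m n k (f : 'I_m -> 'I_n) (x : 'I_(m * k)) : 'I_(n * k) :=
  idx (f (unidx x).1, (unidx x).2).

Lemma mxtens_mapl_inj m n k (f : 'I_m -> 'I_n) :
  injective f -> injective (mxtens_mapl (k := k) f).
Proof.
move=> injf x y; case: (mxtens_indexP x) => i p; case: (mxtens_indexP y) => j q.
by rewrite /mxtens_mapl !mxtens_indexK /= => /(can_inj (@mxtens_indexK _ _)) [/injf -> ->].
Qed.

Lemma ampl_mxsub m n (f : 'I_m -> 'I_n) k (A : 'M[C]_(n * k)) :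
  ampl (mxsub f f) k A = mxsub (mxtens_mapl (k := k) f) (mxtens_mapl (k := k) f) A.
Proof.
move: A; apply: linear_tensdelta_eq; [exact: linear_ampl | exact: linear_mxsub |].
move=> i j p q; rewrite ampl_tensdelta.
apply/matrixP => x y; case: (mxtens_indexP x) => i' p'; case: (mxtens_indexP y) => j' q'.
by rewrite tensmxE !mxE /mxtens_mapl !mxtens_indexK.
Qed.

Lemma channel_mxsub m n (f : 'I_m -> 'I_n) : injective f -> channel (mxsub f f : 'M[C]_n -> 'M[C]_m).
Proof.
move=> injf; split.
- exact: linear_mxsub.
- by apply/matrixP => i j; rewrite !mxE (inj_eq injf).
- by move=> k A pA; rewrite ampl_mxsub; exact: psd_mxsub.
Qed.

Definition mxtens_swap23 m r k (x : 'I_(m * r * k)) : 'I_(m * k * r) :=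
  idx (idx ((unidx (unidx x).1).1, (unidx x).2), (unidx (unidx x).1).2).

Lemma mxtens_swap23_inj m r k : injective (@mxtens_swap23 m r k).
Proof.
move=> x y; case: (mxtens_indexP x) => a p; case: (mxtens_indexP y) => b q.
case: (mxtens_indexP a) => i s; case: (mxtens_indexP b) => j t.
rewrite /mxtens_swap23 !mxtens_indexK /= => /eqP; rewrite !mxtens_index_eq !xpair_eqE.
by rewrite mxtens_index_eq xpair_eqE => /andP[/andP[/eqP -> /eqP ->] /eqP ->].
Qed.

Lemma ampl_tensmx1 m r k A :
  ampl (fun X : 'M[C]_m => X *t (1%:M : 'M[C]_r)) k A
  = mxsub (@mxtens_swap23 m r k) (@mxtens_swap23 m r k) (A *t (1%:M : 'M[C]_r)).
Proof.
move: A; apply: linear_tensdelta_eq;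
  [exact: linear_ampl | exact: (linear_comp (linear_mxsub _ _) (linear_tensmxl _)) |].
move=> i j p q; rewrite ampl_tensdelta.
apply/matrixP => x y; case: (mxtens_indexP x) => a p'; case: (mxtens_indexP y) => b q'.
case: (mxtens_indexP a) => i' s'; case: (mxtens_indexP b) => j' t'.
rewrite tensmxE !mxE /mxtens_swap23 !mxtens_indexK /= ?tensmxE ?mxE ?mxtens_indexK /=.
by rewrite mulrAC.
Qed.

Lemma channel_tensmx1 m r : channel (fun X : 'M[C]_m => X *t (1%:M : 'M[C]_r)).
Proof.
split; [exact: linear_tensmxl | exact: tensmx11 |].
by move=> k A pA; rewrite ampl_tensmx1; apply: psd_mxsub; apply: psd_tensmx1.
Qed.

Lemma channel_tens1mx m r : channel (fun X : 'M[C]_m => (1%:M : 'M[C]_r) *t X).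
Proof.
split; [exact: linear_tensmxr | exact: tensmx11 |].
move=> k A pA.
pose h (x : 'I_(r * m * k)) :=
  idx ((unidx (unidx x).1).1, idx ((unidx (unidx x).1).2, (unidx x).2)).
have -> : ampl (fun X : 'M[C]_m => (1%:M : 'M[C]_r) *t X) k A
          = mxsub h h ((1%:M : 'M[C]_r) *t A).
  move: A {pA}; apply: linear_tensdelta_eq;
    [exact: linear_ampl | exact: (linear_comp (linear_mxsub _ _) (linear_tensmxr _)) |].
  move=> i j p q; rewrite ampl_tensdelta.
  apply/matrixP => x y; case: (mxtens_indexP x) => a p'; case: (mxtens_indexP y) => b q'.
  case: (mxtens_indexP a) => s' i'; case: (mxtens_indexP b) => t' j'.
  rewrite tensmxE !mxE /h !mxtens_indexK /= ?tensmxE ?mxE ?mxtens_indexK /=.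
  by rewrite mulrA.
by apply: psd_mxsub; apply: psd_tens1mx.
Qed.

Lemma channel_exists a b : (0 < a)%N -> exists F : 'M[C]_a -> 'M[C]_b, channel F.
Proof.
move=> a0; pose g (i : 'I_b) := idx (Ordinal a0, i).
exists (fun X => mxsub g g (X *t (1%:M : 'M[C]_b))).
by apply: channel_comp; [apply: channel_mxsub; exact: mxtens_index_injr | exact: channel_tensmx1].
Qed.

(** * Vector, operator and cb norms *)

Lemma sup_ge0 (E : set R) : (forall x, E x -> 0 <= x) -> 0 <= sup E.
Proof.
move=> E0; have [hs|nh] := pselect (has_sup E); last by rewrite sup_out.
case: (hs) => -[x Ex] _; exact: le_trans (E0 _ Ex) (sup_upper_bound hs Ex).
Qed.

Lemma inf_ge0 (E : set R) : (forall x, E x -> 0 <= x) -> 0 <= inf E.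
Proof.
move=> E0; have [[x Ex]|nE] := pselect (E !=set0).
  by apply: lb_le_inf => //; exists x.
have -> : E = set0 by apply/seteqP; split => x // Ex; apply: nE; exists x.
by rewrite inf0.
Qed.

Lemma inf_le_dominated (A B : set R) : A !=set0 ->
  (forall x, A x -> exists2 y, B y & y <= x) -> (forall y, B y -> 0 <= y) ->
  inf B <= inf A.
Proof.
move=> A0 AB B0; apply: lb_le_inf => // x Ax.
have [y By yx] := AB x Ax; apply: le_trans yx.
by apply: ge_inf => //; exists 0 => z Bz; exact: B0.
Qed.

Lemma cauchy_schwarz_sum n (a b : 'I_n -> R) :
  (\sum_i a i * b i) ^+ 2 <= (\sum_i a i ^+ 2) * (\sum_i b i ^+ 2).
Proof.
set A := \sum_i a i ^+ 2; set B := \sum_i b i ^+ 2; set S := \sum_i a i * b i.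
have e1 : A * B = \sum_i \sum_j a i ^+ 2 * b j ^+ 2.
  by rewrite /A mulr_suml; apply: eq_bigr => i _; rewrite /B mulr_sumr.
have e2 : A * B = \sum_i \sum_j a j ^+ 2 * b i ^+ 2 by rewrite e1 exchange_big.
have e3 : S ^+ 2 = \sum_i \sum_j (a i * b i) * (a j * b j).
  by rewrite expr2 /S mulr_suml; apply: eq_bigr => i _; rewrite mulr_sumr.
(* Lagrange's identity *)
have : 0 <= \sum_i \sum_j (a i * b j - a j * b i) ^+ 2.
  by apply: sumr_ge0 => i _; apply: sumr_ge0 => j _; exact: sqr_ge0.
have -> : \sum_i \sum_j (a i * b j - a j * b i) ^+ 2 = A * B + A * B - S ^+ 2 *+ 2.
  rewrite {1}e1 e2 e3 -big_split -sumrMnl -sumrB; apply: eq_bigr => i _.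
  rewrite -big_split -sumrMnl -sumrB; apply: eq_bigr => j _.
  by rewrite mulr2n /=; ring.
by rewrite mulr2n; lra.
Qed.

Lemma normc_ge0 (z : C) : 0 <= nc z.
Proof. by case: z => a b; exact: sqrtr_ge0. Qed.

Lemma normc_sqr (z : C) : nc z ^+ 2 = complex.Re z ^+ 2 + complex.Im z ^+ 2.
Proof. by case: z => a b /=; rewrite sqr_sqrtr // addr_ge0 // sqr_ge0. Qed.

Lemma normc_sum_le I (r : seq I) (P : pred I) (F : I -> C) :
  nc (\sum_(i <- r | P i) F i) <= \sum_(i <- r | P i) nc (F i).
Proof.
elim/big_rec2: _ => [|i y1 y2 _ IH]; first by rewrite Normc.normc0.
by apply: le_trans (le_normcD _ _) _; rewrite lerD2l.
Qed.

Lemma normc_real (x : R) : nc (Complex x 0) = `|x|.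
Proof. by rewrite /= expr0n addr0 sqrtr_sqr. Qed.

Lemma vnorm2E n (v : 'cV[C]_n) : vnorm2 v = \sum_i nc (v i 0) ^+ 2.
Proof. by apply: eq_bigr => i _; rewrite normc_sqr. Qed.

Lemma vnorm2_ge0 n (v : 'cV[C]_n) : 0 <= vnorm2 v.
Proof. by rewrite vnorm2E; apply: sumr_ge0 => i _; exact: sqr_ge0. Qed.

Lemma vnorm_ge0 n (v : 'cV[C]_n) : 0 <= vnorm v.
Proof. exact: sqrtr_ge0. Qed.

Lemma vnorm_sqr n (v : 'cV[C]_n) : vnorm v ^+ 2 = vnorm2 v.
Proof. by rewrite sqr_sqrtr // vnorm2_ge0. Qed.

Lemma vnormD n (u w : 'cV[C]_n) : vnorm (u + w) <= vnorm u + vnorm w.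
Proof.
rewrite -ler_sqr ?nnegrE ?addr_ge0 ?vnorm_ge0 //.
rewrite vnorm_sqr sqrrD !vnorm_sqr !vnorm2E.
have le_entries : \sum_i nc ((u + w) i 0) ^+ 2 <=
    \sum_i (nc (u i 0) ^+ 2 + nc (u i 0) * nc (w i 0) *+ 2 + nc (w i 0) ^+ 2).
  apply: ler_sum => i _; rewrite -sqrrD lerXn2r ?nnegrE ?addr_ge0 ?normc_ge0 //.
  by rewrite mxE; exact: le_normcD.
apply: le_trans le_entries _; rewrite !big_split /= lerD2r lerD2l -mulr2n lerMn2r /=.
have := cauchy_schwarz_sum (fun i => nc (u i 0)) (fun i => nc (w i 0)).
rewrite /= -!vnorm2E -!vnorm_sqr -exprMn => cs.
rewrite -ler_sqr ?nnegrE ?mulr_ge0 ?vnorm_ge0 //.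
by apply: sumr_ge0 => i _; rewrite mulr_ge0 ?normc_ge0.
Qed.

Lemma vnorm0 n : vnorm (0 : 'cV[C]_n) = 0.
Proof.
rewrite /vnorm /vnorm2 big1 ?sqrtr0 // => i _.
by rewrite mxE /= expr0n /= addr0.
Qed.

Lemma vnormZ n c (v : 'cV[C]_n) : vnorm (c *: v) = nc c * vnorm v.
Proof.
rewrite /vnorm vnorm2E.
have -> : \sum_i nc ((c *: v) i 0) ^+ 2 = nc c ^+ 2 * \sum_i nc (v i 0) ^+ 2.
  by rewrite mulr_sumr; apply: eq_bigr => i _; rewrite mxE Normc.normcM exprMn.
by rewrite sqrtrM ?sqr_ge0 // sqrtr_sqr ger0_norm ?normc_ge0 // -vnorm2E.
Qed.

Lemma vnorm_eq0 n (v : 'cV[C]_n) : vnorm v = 0 -> v = 0.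
Proof.
move/eqP; rewrite sqrtr_eq0 => v2le0.
have : vnorm2 v = 0 by apply/eqP; rewrite eq_le v2le0 vnorm2_ge0.
rewrite vnorm2E => /eqP; rewrite psumr_eq0 => [/allP v0|i _]; last exact: sqr_ge0.
apply/matrixP => i j; rewrite [j]ord1 mxE.
have := v0 i (mem_index_enum _); rewrite /= sqrf_eq0 => /eqP.
exact: Normc.eq0_normc.
Qed.

Lemma normc_entry_le_vnorm n (v : 'cV[C]_n) i : nc (v i 0) <= vnorm v.
Proof.
rewrite -ler_sqr ?nnegrE ?normc_ge0 ?vnorm_ge0 //.
rewrite vnorm_sqr vnorm2E (bigD1 i) //= lerDl.
by apply: sumr_ge0 => j _; exact: sqr_ge0.
Qed.

Lemma vnorm_sum_le I (r : seq I) (P : pred I) n (F : I -> 'cV[C]_n) :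
  vnorm (\sum_(i <- r | P i) F i) <= \sum_(i <- r | P i) vnorm (F i).
Proof.
elim/big_rec2: _ => [|i y1 y2 _ IH]; first by rewrite vnorm0.
by apply: le_trans (vnormD _ _) _; rewrite lerD2l.
Qed.

Lemma vnorm_delta n (i : 'I_n) : vnorm (delta_mx i 0 : 'cV[C]_n) = 1.
Proof.
rewrite /vnorm vnorm2E (bigD1 i) //= big1 ?addr0.
  by rewrite mxE !eqxx /= expr1n expr0n addr0 sqrtr1 expr1n sqrtr1.
by move=> j nj; rewrite mxE (negbTE nj) /= expr0n addr0 sqrtr0 expr0n.
Qed.

Lemma vnorm_le_sum_normc n (v : 'cV[C]_n) : vnorm v <= \sum_i nc (v i 0).
Proof.
have ev : v = \sum_i v i 0 *: delta_mx i 0.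
  by rewrite {1}(matrix_sum_delta v); apply: eq_bigr => i _; rewrite big_ord1.
rewrite {1}ev; apply: le_trans (vnorm_sum_le _ _ _) _; apply: ler_sum => i _.
by rewrite vnormZ vnorm_delta mulr1.
Qed.

Lemma vnorm_mulmx_le_entries m n (A : 'M[C]_(m, n)) (v : 'cV[C]_n) :
  vnorm (A *m v) <= (\sum_i \sum_j nc (A i j)) * vnorm v.
Proof.
apply: le_trans (vnorm_le_sum_normc _) _; rewrite mulr_suml; apply: ler_sum => i _.
rewrite mxE mulr_suml; apply: le_trans (normc_sum_le _ _ _) _; apply: ler_sum => j _.
by rewrite Normc.normcM ler_wpM2l ?normc_ge0 ?normc_entry_le_vnorm.
Qed.

Lemma opnorm_has_sup m n (A : 'M[C]_(m, n)) :
  has_sup [set r : R | exists v : 'cV[C]_n, vnorm v <= 1 /\ r = vnorm (A *m v)].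
Proof.
split; first by exists 0, 0; rewrite vnorm0 ler01 mulmx0 vnorm0.
exists (\sum_i \sum_j nc (A i j)) => r [v [v1 ->]].
apply: le_trans (vnorm_mulmx_le_entries _ _) _; rewrite ler_piMr //.
by apply: sumr_ge0 => i _; apply: sumr_ge0 => j _; exact: normc_ge0.
Qed.

Lemma opnorm_ge0 m n (A : 'M[C]_(m, n)) : 0 <= opnorm A.
Proof. by apply: sup_ge0 => x [v [_ ->]]; exact: vnorm_ge0. Qed.

Lemma opnorm_ub m n (A : 'M[C]_(m, n)) v : vnorm v <= 1 -> vnorm (A *m v) <= opnorm A.
Proof. by move=> v1; apply: (sup_upper_bound (opnorm_has_sup A)); exists v. Qed.

Lemma vnorm_mulmx_le m n (A : 'M[C]_(m, n)) v : vnorm (A *m v) <= opnorm A * vnorm v.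
Proof.
have [v0|v0] := eqVneq (vnorm v) 0.
  by rewrite (vnorm_eq0 v0) mulmx0 vnorm0 mulr0 vnorm0.
have vp : 0 < vnorm v by rewrite lt_def v0 vnorm_ge0.
pose c : C := Complex (vnorm v)^-1 0.
have nc_c : nc c = (vnorm v)^-1 by rewrite normc_real ger0_norm // invr_ge0 vnorm_ge0.
have := opnorm_ub A (v := c *: v).
rewrite vnormZ nc_c mulVf // lexx -scalemxAr vnormZ nc_c => /(_ isT) cv.
by rewrite -ler_pdivrMr // mulrC.
Qed.

Lemma opnorm_le m n (A : 'M[C]_(m, n)) c :
  0 <= c -> (forall v, vnorm (A *m v) <= c * vnorm v) -> opnorm A <= c.
Proof.
move=> c0 Ac; apply: ge_sup; first by exists 0, 0; rewrite vnorm0 ler01 mulmx0 vnorm0.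
by move=> r [v [v1 ->]]; apply: le_trans (Ac v) _; rewrite ler_piMr.
Qed.

Lemma opnorm0 m n : opnorm (0 : 'M[C]_(m, n)) = 0.
Proof.
apply/eqP; rewrite eq_le opnorm_ge0 andbT.
by apply: opnorm_le => // v; rewrite mul0mx vnorm0 mul0r.
Qed.

Lemma opnormD m n (A B : 'M[C]_(m, n)) : opnorm (A + B) <= opnorm A + opnorm B.
Proof.
apply: opnorm_le; first by rewrite addr_ge0 ?opnorm_ge0.
move=> v; rewrite mulmxDl mulrDl; apply: le_trans (vnormD _ _) _.
by rewrite lerD ?vnorm_mulmx_le.
Qed.

Lemma opnorm_sum_le I (r : seq I) (P : pred I) m n (F : I -> 'M[C]_(m, n)) :
  opnorm (\sum_(i <- r | P i) F i) <= \sum_(i <- r | P i) opnorm (F i).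
Proof.
elim/big_rec2: _ => [|i y1 y2 _ IH]; first by rewrite opnorm0.
by apply: le_trans (opnormD _ _) _; rewrite lerD2l.
Qed.

Lemma opnorm_mulmx m n p (A : 'M[C]_(m, n)) (B : 'M[C]_(n, p)) :
  opnorm (A *m B) <= opnorm A * opnorm B.
Proof.
apply: opnorm_le; first by rewrite mulr_ge0 ?opnorm_ge0.
move=> v; rewrite -mulmxA; apply: le_trans (vnorm_mulmx_le _ _) _.
by rewrite -mulrA ler_wpM2l ?opnorm_ge0 ?vnorm_mulmx_le.
Qed.

Lemma big_inj_le m n (f : 'I_m -> 'I_n) (h : 'I_n -> R) :
  injective f -> (forall j, 0 <= h j) -> \sum_i h (f i) <= \sum_j h j.
Proof.
move=> injf h0; rewrite (bigID (mem (f @: [set: _])%SET)) /=.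
rewrite big_imset /=; last by move=> x y _ _; exact: injf.
rewrite [X in _ <= X + _](eq_bigl xpredT) => [|i]; last by rewrite inE.
by rewrite /= lerDl; apply: sumr_ge0.
Qed.

Lemma big_inj_supp (V : nmodType) m n (g : 'I_m -> 'I_n) (h : 'I_n -> V) :
  injective g -> (forall j, (forall i, g i != j) -> h j = 0) ->
  \sum_j h j = \sum_i h (g i).
Proof.
move=> injg h0; rewrite (bigID (mem (g @: [set: _])%SET)) /=.
rewrite big_imset /=; last by move=> x y _ _; exact: injg.
rewrite [X in X + _ = _](eq_bigl xpredT) => [|i]; last by rewrite inE.
rewrite [X in _ + X = _]big1 ?addr0 // => j nj; apply: h0 => i.
by apply: contra nj => /eqP <-; apply: imset_f.
Qed.

Definition vext m n (g : 'I_m -> 'I_n) (u : 'cV[C]_m) : 'cV[C]_n :=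
  \col_j (if [pick i | g i == j] is Some i then u i 0 else 0).

Lemma vextE m n (g : 'I_m -> 'I_n) u i : injective g -> vext g u (g i) 0 = u i 0.
Proof.
move=> injg; rewrite mxE; case: pickP => [i' /eqP /injg -> //|/(_ i)].
by rewrite eqxx.
Qed.

Lemma vext_out m n (g : 'I_m -> 'I_n) u j : (forall i, g i != j) -> vext g u j 0 = 0.
Proof. by move=> gj; rewrite mxE; case: pickP => [i' e|//]; rewrite (negbTE (gj i')) in e. Qed.

Lemma vnorm_vext m n (g : 'I_m -> 'I_n) u : injective g -> vnorm (vext g u) = vnorm u.
Proof.
move=> injg; rewrite /vnorm !vnorm2E; congr Num.sqrt.
rewrite (big_inj_supp (h := fun j => nc (vext g u j 0) ^+ 2) injg).
  by apply: eq_bigr => i _; rewrite vextE.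
by move=> j gj; rewrite vext_out // Normc.normc0 expr0n.
Qed.

Lemma vnorm_rowsub_le m n (f : 'I_m -> 'I_n) (v : 'cV[C]_n) :
  injective f -> vnorm (mxsub f id v) <= vnorm v.
Proof.
move=> injf; rewrite -ler_sqr ?nnegrE ?vnorm_ge0 // !vnorm_sqr !vnorm2E.
have -> : \sum_i nc (mxsub f id v i 0) ^+ 2 = \sum_i nc (v (f i) 0) ^+ 2.
  by apply: eq_bigr => i _; rewrite mxE.
by apply: (big_inj_le (h := fun j => nc (v j 0) ^+ 2)) => // j; exact: sqr_ge0.
Qed.

Lemma mxsub_mulmx m n p q (f : 'I_m -> 'I_p) (g : 'I_n -> 'I_q) (X : 'M[C]_(p, q)) u :
  injective g -> mxsub f g X *m u = mxsub f id (X *m vext g u).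
Proof.
move=> injg; apply/matrixP => i j; rewrite !mxE [j]ord1.
rewrite (big_inj_supp (h := fun k => X (f i) k * vext g u k 0) injg).
  by apply: eq_bigr => k _; rewrite vextE // mxE.
by move=> k gk; rewrite vext_out // mulr0.
Qed.

Lemma opnorm_mxsub m n p q (f : 'I_m -> 'I_p) (g : 'I_n -> 'I_q) (X : 'M[C]_(p, q)) :
  injective f -> injective g -> opnorm (mxsub f g X) <= opnorm X.
Proof.
move=> injf injg; apply: opnorm_le; first exact: opnorm_ge0.
move=> u; rewrite mxsub_mulmx //; apply: le_trans (vnorm_rowsub_le _ injf) _.
by rewrite -(vnorm_vext u injg); exact: vnorm_mulmx_le.
Qed.

(* ||(A *t 1) v||^2 splits as the sum over s of ||A v_s||^2, v_s the s-th slice of v. *)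
Lemma opnorm_tensmx1 m n r (A : 'M[C]_(m, n)) : opnorm (A *t (1%:M : 'M[C]_r)) <= opnorm A.
Proof.
apply: opnorm_le; first exact: opnorm_ge0.
move=> v; pose vs (s : 'I_r) : 'cV[C]_n := mxsub (fun j : 'I_n => idx (j, s)) id v.
have Av i s : ((A *t (1%:M : 'M[C]_r)) *m v) (idx (i, s)) 0 = (A *m vs s) i 0.
  rewrite [LHS]mxE [RHS]mxE big_mxtens_index; apply: eq_bigr => j _.
  rewrite (bigD1 s) //= [\sum_(_ < _ | _ != _) _]big1 ?addr0.
    by rewrite tensmxE [_ s s]mxE eqxx mulr1 /vs mxE.
  by move=> t ts; rewrite tensmxE [_ s t]mxE eq_sym (negbTE ts) mulr0 mul0r.
have Avs : vnorm2 ((A *t (1%:M : 'M[C]_r)) *m v) = \sum_s vnorm2 (A *m vs s).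
  rewrite vnorm2E big_mxtens_index exchange_big; apply: eq_bigr => s _.
  by rewrite vnorm2E; apply: eq_bigr => i _; rewrite Av.
have vs2 : vnorm2 v = \sum_s vnorm2 (vs s).
  rewrite vnorm2E big_mxtens_index exchange_big; apply: eq_bigr => s _.
  by rewrite vnorm2E; apply: eq_bigr => j _; rewrite mxE.
rewrite -ler_sqr ?nnegrE ?mulr_ge0 ?opnorm_ge0 ?vnorm_ge0 //.
rewrite exprMn !vnorm_sqr Avs vs2 mulr_sumr; apply: ler_sum => s _.
rewrite -!vnorm_sqr -exprMn lerXn2r ?nnegrE ?mulr_ge0 ?opnorm_ge0 ?vnorm_ge0 //.
exact: vnorm_mulmx_le.
Qed.

Definition mxtens_swap m n (x : 'I_(m * n)) : 'I_(n * m) := idx ((unidx x).2, (unidx x).1).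

Lemma mxtens_swap_inj m n : injective (@mxtens_swap m n).
Proof.
move=> x y; case: (mxtens_indexP x) => i p; case: (mxtens_indexP y) => j q.
rewrite /mxtens_swap !mxtens_indexK /= => /eqP; rewrite mxtens_index_eq xpair_eqE.
by case/andP => /eqP -> /eqP ->.
Qed.

Lemma opnorm_tens1mx m n r (A : 'M[C]_(m, n)) : opnorm ((1%:M : 'M[C]_r) *t A) <= opnorm A.
Proof.
have -> : (1%:M : 'M[C]_r) *t A
          = mxsub (@mxtens_swap r m) (@mxtens_swap r n) (A *t (1%:M : 'M[C]_r)).
  apply/matrixP => x y; case: (mxtens_indexP x) => i p; case: (mxtens_indexP y) => j q.
  by rewrite [RHS]mxE /mxtens_swap !mxtens_indexK /= !tensmxE mulrC.
apply: le_trans (opnorm_mxsub _ (@mxtens_swap_inj _ _) (@mxtens_swap_inj _ _)) _.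
exact: opnorm_tensmx1.
Qed.

Lemma opnorm_tensmx m n p q (X : 'M[C]_(m, n)) (Y : 'M[C]_(p, q)) :
  opnorm (X *t Y) <= opnorm X * opnorm Y.
Proof.
have -> : X *t Y = (X *t (1%:M : 'M[C]_p)) *m ((1%:M : 'M[C]_n) *t Y).
  by rewrite tensmx_mul mulmx1 mul1mx.
apply: le_trans (opnorm_mulmx _ _) _.
by apply: ler_pM; rewrite ?opnorm_ge0 ?opnorm_tensmx1 ?opnorm_tens1mx.
Qed.

Lemma opnorm_ampl_le a b (S : 'M[C]_a -> 'M[C]_b) k A : linear S ->
  opnorm (ampl S k A) <= (\sum_i \sum_j opnorm (S (delta_mx i j))) * opnorm A.
Proof.
move=> lS; rewrite ampl_blockE //; apply: le_trans (opnorm_sum_le _ _ _) _.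
rewrite mulr_suml; apply: ler_sum => i _; apply: le_trans (opnorm_sum_le _ _ _) _.
rewrite mulr_suml; apply: ler_sum => j _; apply: le_trans (opnorm_tensmx _ _) _.
by rewrite ler_wpM2l ?opnorm_ge0 // opnorm_mxsub //; exact: mxtens_index_injr.
Qed.

Lemma cbnorm_has_sup a b (S : 'M[C]_a -> 'M[C]_b) : linear S ->
  has_sup [set r : R | exists (k : nat) (A : 'M[C]_(a * k.+1)),
                         opnorm A <= 1 /\ r = opnorm (ampl S k.+1 A)].
Proof.
move=> lS; split; first by exists (opnorm (ampl S 1 0)), 0%N, 0; rewrite opnorm0 ler01.
exists (\sum_i \sum_j opnorm (S (delta_mx i j))) => r [k [A [A1 ->]]].
apply: le_trans (opnorm_ampl_le _ lS) _; rewrite ler_piMr //.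
by apply: sumr_ge0 => i _; apply: sumr_ge0 => j _; exact: opnorm_ge0.
Qed.

Lemma cbnorm_ge0 a b (S : 'M[C]_a -> 'M[C]_b) : 0 <= cbnorm S.
Proof. by apply: sup_ge0 => x [k [A [_ ->]]]; exact: opnorm_ge0. Qed.

Lemma cbnorm_ub a b (S : 'M[C]_a -> 'M[C]_b) k (A : 'M[C]_(a * k.+1)) :
  linear S -> opnorm A <= 1 -> opnorm (ampl S k.+1 A) <= cbnorm S.
Proof. by move=> lS A1; apply: (sup_upper_bound (cbnorm_has_sup lS)); exists k, A. Qed.

(** * Monotonicity of the coding error *)

Definition code_errors d1 d2 (T : 'M[C]_d2 -> 'M[C]_d1) (M : nat) : set R :=
  [set r : R | exists (E : 'M[C]_d1 -> 'M[C]_M) (D : 'M[C]_M -> 'M[C]_d2),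
     channel E /\ channel D /\ r = cbnorm (fun A : 'M[C]_M => E (T (D A)) - A)].

Lemma DeltaE d1 d2 (T : 'M[C]_d2 -> 'M[C]_d1) M : Delta T M = inf (code_errors T M).
Proof. by []. Qed.

Lemma code_errors_ge0 d1 d2 (T : 'M[C]_d2 -> 'M[C]_d1) M x :
  code_errors T M x -> 0 <= x.
Proof. by case=> E [D [_ [_ ->]]]; exact: cbnorm_ge0. Qed.

Lemma Delta_ge0 d1 d2 (T : 'M[C]_d2 -> 'M[C]_d1) M : 0 <= Delta T M.
Proof. by apply: inf_ge0; exact: code_errors_ge0. Qed.

Lemma code_errors_neq0 d1 d2 (T : 'M[C]_d2 -> 'M[C]_d1) M :
  (0 < d1)%N -> (0 < M)%N -> code_errors T M !=set0.
Proof.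
move=> d0 M0; have [E chE] := channel_exists M d0; have [D chD] := channel_exists d2 M0.
by exists (cbnorm (fun A : 'M[C]_M => E (T (D A)) - A)); exists E, D.
Qed.

Lemma pdim_gt0 d n : (0 < d)%N -> (0 < pdim d n)%N.
Proof. by move=> d0; elim: n => //= n IH; rewrite muln_gt0 d0. Qed.

(* A code for n uses serves for n + 1 uses: the decoding feeds the identity to
   the first use, the encoding compresses its output to a corner. *)
Lemma code_errors_tpowS d1 d2 (T : 'M[C]_d2 -> 'M[C]_d1) n M :
  (0 < d1)%N -> channel T -> code_errors (tpow T n) M `<=` code_errors (tpow T n.+1) M.
Proof.
move=> d0 [lT uT _] r [E [D [chE [chD ->]]]].
pose f (p : 'I_(pdim d1 n)) := idx (Ordinal d0, p).
exists (fun Y : 'M[C]_(d1 * pdim d1 n) => E (mxsub f f Y)).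
exists (fun A : 'M[C]_M => (1%:M : 'M[C]_d2) *t D A).
split; first by apply: channel_comp => //; apply: channel_mxsub; exact: mxtens_index_injr.
split; first by apply: channel_comp => //; exact: channel_tens1mx.
congr (cbnorm _); apply: funext => A /=.
rewrite (tensmap_tensmx _ _ lT (@linear_tpow _ _ T n)) uT.
congr (E _ - _); apply/matrixP => i j.
by rewrite !mxE /f ?tensmxE ?mxtens_indexK /= mul1r.
Qed.

Lemma Delta_tpow_le d1 d2 (T : 'M[C]_d2 -> 'M[C]_d1) n n' M :
  (0 < d1)%N -> (0 < M)%N -> channel T -> (n <= n')%N ->
  Delta (tpow T n') M <= Delta (tpow T n) M.
Proof.
move=> d0 M0 chT /subnKC <-; elim: (n' - n)%N => [|k IH]; first by rewrite addn0.
apply: le_trans IH; rewrite addnS !DeltaE; apply: inf_le_dominated.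
- by apply: code_errors_neq0 => //; exact: pdim_gt0.
- by move=> x ex; exists x => //; exact: code_errors_tpowS.
- exact: code_errors_ge0.
Qed.

(* Without output dimension there is no unital encoding, so [Delta] is the
   infimum of the empty set, i.e. 0. *)
Lemma Delta_tpow_dim0 d2 (T : 'M[C]_d2 -> 'M[C]_0) n M :
  (0 < M)%N -> Delta (tpow T n.+1) M = 0.
Proof.
move=> M0; rewrite DeltaE.
have -> : code_errors (tpow T n.+1) M = set0; last exact: inf0.
apply/seteqP; split => // r [E [D [[lE uE _] _]]].
have e1 : (1%:M : 'M[C]_(pdim 0 n.+1)) = 0.
  by apply/matrixP => -[i Hi]; exfalso; move: Hi; rewrite /= mul0n ltn0.
move: uE; rewrite e1 (linmap0 lE) => /matrixP/(_ (Ordinal M0) (Ordinal M0)).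
by rewrite !mxE eqxx /= => /esym/eqP; rewrite oner_eq0.
Qed.

(* [A |-> A *t 1] restricted to an index set containing the corner
   {(i, 0) : i < K}: the multiplicity [M] makes the embedding unital. *)
Lemma corner_embedding K M (KM : (K <= M)%N) : (0 < K)%N ->
  exists Phi : 'M[C]_K -> 'M[C]_M, [/\ channel Phi,
    forall A, mxsub (widen_ord KM) (widen_ord KM) (Phi A) = A &
    forall k A, opnorm (ampl Phi k A) <= opnorm A].
Proof.
move=> K0; pose m0 : 'I_M := Ordinal (leq_trans K0 KM).
pose g (i : 'I_M) :=
  if (insub (val i) : option 'I_K) is Some i' then idx (i', m0) else idx (Ordinal K0, i).
have injg : injective g.
  move=> x y; rewrite /g; case: insubP => [x' xK ex|nx]; case: insubP => [y' yK ey|ny];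
    move/eqP; rewrite mxtens_index_eq xpair_eqE.
  - by case/andP => /eqP exy _; apply: val_inj; rewrite -ex -ey exy.
  - by case/andP => _ /eqP ey; move: ny; rewrite -ey /= K0.
  - by case/andP => _ /eqP ex; move: nx; rewrite ex /= K0.
  - by case/andP => _ /eqP.
exists (fun A => mxsub g g (A *t (1%:M : 'M[C]_M))); split.
- by apply: channel_comp; [exact: channel_mxsub | exact: channel_tensmx1].
- move=> A; apply/matrixP => i j; rewrite [LHS]mxE [LHS]mxE /g /= !valK.
  by rewrite tensmxE !mxE eqxx mulr1.
move=> k A; rewrite ampl_comp; last exact: linear_mxsub.
rewrite ampl_mxsub ampl_tensmx1.
apply: le_trans (opnorm_mxsub _ (mxtens_mapl_inj injg) (mxtens_mapl_inj injg)) _.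
apply: le_trans (opnorm_mxsub _ (@mxtens_swap23_inj _ _ _) (@mxtens_swap23_inj _ _ _)) _.
exact: opnorm_tensmx1.
Qed.

(* A code of size M serves for size K <= M through the corner embedding; the
   new error map is a compression of the old one composed with the embedding. *)
Lemma code_errors_shrink d1 d2 (T : 'M[C]_d2 -> 'M[C]_d1) K M : linear T ->
  (0 < K)%N -> (K <= M)%N ->
  forall r, code_errors T M r -> exists2 r', code_errors T K r' & r' <= r.
Proof.
move=> lT K0 KM r [E [D [chE [chD ->]]]].
have [lE _ _] := chE; have [lD _ _] := chD.
have [Phi [chPhi PhiK opnorm_Phi]] := corner_embedding KM K0.
have [lPhi _ _] := chPhi.
pose w := widen_ord KM.
have injw : injective w by move=> x y /(congr1 val) /= /val_inj.
pose Psi (X : 'M[C]_M) := E (T (D X)) - X.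
have lPsi : linear Psi by apply: linear_sub => //; do 2 apply: linear_comp => //.
exists (cbnorm (fun A : 'M[C]_K => mxsub w w (E (T (D (Phi A)))) - A)).
  exists (fun X => mxsub w w (E X)), (fun A => D (Phi A)).
  split; first by apply: channel_comp => //; exact: channel_mxsub.
  by split => //; exact: channel_comp.
have -> : (fun A : 'M[C]_K => mxsub w w (E (T (D (Phi A)))) - A)
          = (fun A => mxsub w w (Psi (Phi A))).
  by apply: funext => A; rewrite /Psi (linmapB (linear_mxsub w w)) PhiK.
apply: ge_sup; first by exists (opnorm (ampl (fun A : 'M[C]_K => mxsub w w (Psi (Phi A))) 1 0)),
  0%N, 0; rewrite opnorm0 ler01.
move=> x [k [A [A1 ->]]].
rewrite ampl_comp; last exact: linear_mxsub.
rewrite ampl_comp // ampl_mxsub.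
apply: le_trans (opnorm_mxsub _ (mxtens_mapl_inj injw) (mxtens_mapl_inj injw)) _.
by apply: cbnorm_ub => //; exact: le_trans (opnorm_Phi _ _) A1.
Qed.

Lemma Delta_mono d1 d2 (T : 'M[C]_d2 -> 'M[C]_d1) n n' K M : channel T ->
  (0 < n)%N -> (n <= n')%N -> (0 < K)%N -> (K <= M)%N ->
  Delta (tpow T n') K <= Delta (tpow T n) M.
Proof.
case: d1 T => [|d1] T chT n0 nn' K0 KM.
  case: n' nn' => [|n'] nn'; first by move: (leq_trans n0 nn').
  by rewrite Delta_tpow_dim0 //; exact: Delta_ge0.
have M0 : (0 < M)%N := leq_trans K0 KM.
apply: le_trans (Delta_tpow_le _ M0 chT nn') => //.
rewrite !DeltaE; apply: inf_le_dominated.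
- by apply: code_errors_neq0 => //; exact: pdim_gt0.
- by apply: code_errors_shrink => //; exact: linear_tpow.
- exact: code_errors_ge0.
Qed.

(** * Asymptotics along the subsequence *)

Lemma nearE_oo (P : nat -> Prop) :
  (\forall k \near \oo, P k) -> exists N, forall k, (N <= k)%N -> P k.
Proof. by case=> N _ PN; exists N => k Nk; apply: PN. Qed.

Lemma limn_einfE (u : (\bar R)^nat) : limn_einf u = ereal_sup (range (einfs u)).
Proof. by rewrite limn_einf_lim; apply/cvg_lim => //; exact: cvg_einfs_sup. Qed.

Lemma lt_limn_einf (u : (\bar R)^nat) (x : \bar R) :
  (x < limn_einf u)%E -> exists N, forall k, (N <= k)%N -> (x < u k)%E.
Proof.
rewrite limn_einfE => /ereal_sup_gt [_ [N _ <-] xN]; exists N => k Nk.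
by apply: (lt_le_trans xN); apply: ereal_inf_lbound; exists k.
Qed.

Lemma le_limn_einf (u : (\bar R)^nat) (y : \bar R) N :
  (forall k, (N <= k)%N -> (y <= u k)%E) -> (y <= limn_einf u)%E.
Proof.
move=> yu; rewrite limn_einfE; apply: le_ereal_sup_tmp; exists (einfs u N); first by exists N.
by apply: le_ereal_inf_tmp => _ [k Nk <-]; exact: yu.
Qed.

Lemma le_limn_einf_approx (u : (\bar R)^nat) (l : R) :
  (forall e, 0 < e -> exists N, forall k, (N <= k)%N -> ((l - e)%:E <= u k)%E) ->
  (l%:E <= limn_einf u)%E.
Proof.
move=> lu; apply/lee_subgt0Pr => e e0; have [N leu] := lu e e0.
by rewrite -EFinB; exact: le_limn_einf leu.
Qed.

Lemma increasing_bracket (n : nat -> nat) : (forall a, (n a < n a.+1)%N) ->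
  forall A m, (n A <= m)%N -> exists a, [/\ (A <= a)%N, (n a <= m)%N & (m < n a.+1)%N].
Proof.
move=> ninc A m Am.
have ge_id a : (a <= n a)%N by elim: a => // a IH; exact: leq_ltn_trans IH (ninc a).
have exP : exists a, (n a <= m)%N by exists A.
have [a nam maxa] := ex_maxnP exP (fun a nam => leq_trans (ge_id a) nam).
exists a; split => //; first exact: maxa.
by rewrite ltnNge; apply/negP => /maxa; rewrite ltnn.
Qed.

Lemma pow2E (x : R) : (2 : R) `^ x = expR (x * ln 2).
Proof. by rewrite /powR pnatr_eq0. Qed.

Lemma ln2_gt0 : 0 < ln (2 : R).
Proof. by apply: ln_gt0; rewrite ltr1n. Qed.

Lemma truncn_pow2_gt0 (c x : R) : 0 <= c -> 0 <= x -> (0 < Num.truncn ((2 : R) `^ (c * x)))%N.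
Proof.
move=> c0 x0; rewrite truncn_ge_nat ?powR_ge0 // pow2E.
by apply: le_trans (expR_ge1Dx _); rewrite lerDl !mulr_ge0 // ltW // ln2_gt0.
Qed.

Lemma ratio_eventually_le (u : nat -> nat) (c c' : R) :
  (forall a, (0 < u a)%N) -> (fun a => (u a.+1)%:R / (u a)%:R : R) @ \oo --> (1 : R) ->
  0 <= c -> c < c' -> exists N, forall a, (N <= a)%N -> c * (u a.+1)%:R <= c' * (u a)%:R.
Proof.
move=> upos ratio c0 cc'.
have [->|cn0] := eqVneq c 0; first by exists 0%N => a _; rewrite mul0r mulr_ge0 //; lra.
have cpos : 0 < c by rewrite lt_def cn0 c0.
have := cvgr_lt _ ratio (c' / c); rewrite ltr_pdivlMr // mul1r => /(_ _ cc').
case/nearE_oo => N ratio_lt; exists N => a /ratio_lt.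
rewrite ltr_pdivrMr ?ltr0n // => ua_lt.
have : c * (u a.+1)%:R < c * (c' / c * (u a)%:R) by rewrite ltr_pM2l.
by rewrite mulrA mulrCA divff ?mulr1 //; move/ltW.
Qed.

Lemma le_neg_ln_div (x mu lam eta na m : R) :
  0 < x -> 0 <= lam -> 0 < eta -> 0 < m ->
  x <= mu * expR (- lam * na) -> m < (1 + eta) * na -> ln mu <= eta * m ->
  lam - eta * (lam + 1) <= - ln x / m.
Proof.
move=> x0 lam0 eta0 m0 x_le m_lt lnmu.
have mu0 : 0 < mu by have := lt_le_trans x0 x_le; rewrite pmulr_lgt0 ?expR_gt0.
have lnx : ln x <= ln mu - lam * na.
  move: x_le; rewrite -ler_ln ?posrE ?mulr_gt0 ?expR_gt0 // lnM ?posrE ?expR_gt0 //.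
  by rewrite expRK mulNr.
(* na >= m (1 - eta), as 1 / (1 + eta) >= 1 - eta *)
have eta2m : 0 <= eta * (eta * m) by rewrite !mulr_ge0 // ltW.
have : 0 <= (1 + eta) * (na - m + eta * m) by nra.
rewrite pmulr_rge0; last by lra.
by move=> na_ge; rewrite ler_pdivlMr //; nra.
Qed.

Section Subsequence.
Variables (n M : nat -> nat).
Hypothesis n_gt0 : forall a, (0 < n a)%N.
Hypothesis M_gt0 : forall a, (0 < M a)%N.
Hypothesis n_ratio : (fun a => (n a.+1)%:R / (n a)%:R : R) @ \oo --> (1 : R).
Variable c : R.
Hypothesis c_ge0 : 0 <= c.
Hypothesis c_lt_rate :
  (c%:E < limn_einf (fun a => ((ln ((M a)%:R : R) / ln 2) / (n a)%:R)%:E))%E.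

Lemma truncn_rate_le : exists A, forall a m, (A <= a)%N -> (m < n a.+1)%N ->
  (Num.truncn ((2 : R) `^ (c * m%:R)) <= M a)%N.
Proof.
move: c_lt_rate; set rate := limn_einf _ => c_rate.
have [c' cc' c'_rate] : exists2 c' : R, c < c' & (c'%:E < rate)%E.
  move: c_rate; case: rate => [l| |] //= cl.
  - by rewrite lte_fin in cl; exists ((c + l) / 2); [lra | rewrite lte_fin; lra].
  - by exists (c + 1); [lra | exact: ltry].
have [N1 rateN1] := lt_limn_einf c'_rate.
have [N2 ratioN2] := ratio_eventually_le n_gt0 n_ratio c_ge0 cc'.
exists (maxn N1 N2) => a m; rewrite geq_max => /andP[a1 a2] ma.
have := rateN1 _ a1; rewrite /= lte_fin ltr_pdivlMr ?ltr0n // ltr_pdivlMr ?ln2_gt0 // => c'M.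
have cmM : c * m%:R * ln 2 < ln (M a)%:R.
  apply: le_lt_trans c'M; rewrite ler_wpM2r ?(ltW ln2_gt0) //.
  by apply: le_trans (ratioN2 _ a2); rewrite ler_wpM2l // ler_nat ltnW.
rewrite truncn_le_nat pow2E; apply: lt_trans (_ : (M a)%:R < _); last by rewrite ltr_nat.
by rewrite -[X in _ < X](lnK (x := (M a)%:R)) ?posrE ?ltr0n // ltr_expR.
Qed.

Lemma Delta_tpow_le_subseq d1 d2 (T : 'M[C]_d2 -> 'M[C]_d1) :
  channel T -> (forall a, (n a < n a.+1)%N) ->
  exists A, forall B m, (A <= B)%N -> (n B <= m)%N ->
    exists2 a, [/\ (B <= a)%N, (n a <= m)%N & (m < n a.+1)%N] &
      Delta (tpow T m) (Num.truncn ((2 : R) `^ (c * m%:R))) <= Delta (tpow T (n a)) (M a).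
Proof.
move=> chT n_incr; have [A rate_le] := truncn_rate_le.
exists A => B m AB Bm; have [a [Ba nam mna]] := increasing_bracket n_incr Bm.
exists a => //; apply: Delta_mono => //; first exact: truncn_pow2_gt0.
exact: rate_le (leq_trans AB Ba) mna.
Qed.

Lemma achievable_of_subseq d1 d2 (T : 'M[C]_d2 -> 'M[C]_d1) :
  channel T -> (forall a, (n a < n a.+1)%N) ->
  (fun a => Delta (tpow T (n a)) (M a)) @ \oo --> (0 : R) -> achievable T c.
Proof.
move=> chT n_incr Delta_cvg; have [A Delta_le] := Delta_tpow_le_subseq chT n_incr.
apply/cvgrPdist_lt => e e0.
have /cvgrPdist_lt/(_ e e0)/nearE_oo [A' Delta_lt] := Delta_cvg.
exists (n (maxn A A')) => // m /= Am.
have [a [Aa _ _] Dm_le] := Delta_le _ _ (leq_maxl A A') Am.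
rewrite sub0r normrN ger0_norm ?Delta_ge0 //; apply: le_lt_trans Dm_le _.
have := Delta_lt a (leq_trans (leq_maxr _ _) Aa).
by rewrite sub0r normrN ger0_norm ?Delta_ge0.
Qed.

Lemma err_exponent_ge_of_subseq d1 d2 (T : 'M[C]_d2 -> 'M[C]_d1) (mu lam : R) :
  channel T -> (forall a, (n a < n a.+1)%N) -> 0 <= lam ->
  (forall a, Delta (tpow T (n a)) (M a) <= mu * expR (- lam * (n a)%:R)) ->
  (lam%:E <= limn_einf (err_exponent_seq T c))%E.
Proof.
move=> chT n_incr lam0 Delta_exp; have [A Delta_le] := Delta_tpow_le_subseq chT n_incr.
apply: le_limn_einf_approx => e e0.
pose eta := e / (lam + 1).
have eta0 : 0 < eta by rewrite divr_gt0 //; lra.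
have e_eta : lam - e = lam - eta * (lam + 1) by rewrite /eta divfK //; lra.
have /nearE_oo [N ratio_lt] : \forall a \near \oo, (n a.+1)%:R / (n a)%:R < 1 + eta.
  by apply: (cvgr_lt _ n_ratio); lra.
exists (maxn (n (maxn A N)) (Num.truncn (`|ln mu| / eta)).+1) => m.
rewrite geq_max => /andP[Am mu_m].
have [a [Aa _ mna] Dm_le] := Delta_le _ _ (leq_maxl A N) Am.
have m0 : (0 : R) < m%:R by rewrite ltr0n (leq_trans (n_gt0 _) Am).
rewrite /err_exponent_seq; set x := Delta _ _.
case: eqP => [_|xn0]; first exact: leey.
rewrite lee_fin e_eta; apply: le_neg_ln_div (le_trans Dm_le (Delta_exp a)) _ _ => //.
- by rewrite lt_def Delta_ge0 andbT; apply/eqP.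
- apply: lt_trans (_ : (n a.+1)%:R < _); first by rewrite ltr_nat.
  by rewrite -ltr_pdivrMr ?ltr0n // ratio_lt // (leq_trans (leq_maxr _ _) Aa).
- have : `|ln mu| / eta < m%:R.
    by apply: lt_le_trans (truncnS_gt _) _; rewrite ler_nat.
  rewrite ltr_pdivrMr // => lnmu_lt; apply: le_trans (ler_norm _) _.
  by rewrite mulrC ltW.
Qed.

End Subsequence.

End ChannelCoding.

Unset Implicit Arguments. Set Strict Implicit. Set Printing Implicit Defensive.

Theorem lemma1 (R : realType) (d1 d2 : nat) (T : 'M[complex R]_d2 -> 'M[complex R]_d1)
  (n : nat -> nat) (M : nat -> nat) :
  channel T ->
  (forall a, (0 < n a)%N) ->
  (forall a, (n a < n a.+1)%N) ->
  (fun a => (n a.+1)%:R / (n a)%:R : R) @ \oo --> (1 : R) ->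
  (forall a, (0 < M a)%N) ->
  (fun a => Delta (tpow T (n a)) (M a)) @ \oo --> (0 : R) ->
  (forall c : R, 0 <= c ->
     (c%:E < limn_einf (fun a => ((ln ((M a)%:R : R) / ln 2) / (n a)%:R)%:E))%E ->
     achievable T c)
  /\
  (forall mu lam : R, 0 <= mu -> 0 <= lam ->
     (forall a, Delta (tpow T (n a)) (M a) <= mu * expR (- lam * (n a)%:R)) ->
     forall c : R, 0 <= c ->
     (c%:E < limn_einf (fun a => ((ln ((M a)%:R : R) / ln 2) / (n a)%:R)%:E))%E ->
     (lam%:E <= limn_einf (err_exponent_seq T c))%E).
Proof.
move=> chT n_gt0 n_incr n_ratio M_gt0 Delta_cvg; split=> [c c0 c_rate|].
  exact: (achievable_of_subseq n_gt0 M_gt0 n_ratio c0 c_rate chT n_incr Delta_cvg).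
move=> mu lam _ lam0 Delta_exp c c0 c_rate.
exact: (err_exponent_ge_of_subseq n_gt0 M_gt0 n_ratio c0 c_rate chT n_incr lam0 Delta_exp).
Qed.
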